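(* Let $a_c>b_c>0$, $k_e>0$, $a_e^2=a_c^2+k_e$, $b_e^2=b_c^2+k_e$, let $c$ be the ellipse $x^2/a_c^2+y^2/b_c^2=1$ and $e$ the ellipse $x^2/a_e^2+y^2/b_e^2=1$, with center $O$. Let $P_1P_2\dots P_N$ be an $N$-sided periodic billiard in $e$ with caustic $c$ and turning number $\tau$, and let $P_1'P_2'\dots P_N'$ be its conjugate billiard; indices are taken modulo $N$. Then: (i) If $N$ is even and $\tau$ is odd, the billiard is centrally symmetric with respect to $O$ (namely $P_{i+N/2}$ is the reflection of $P_i$ in $O$). (ii) If $N=2n+1$ is odd and $\tau$ is odd, the billiard is centrally symmetric with respect to $O$ to its conjugate billiard, with $P_i$ corresponding to $P'_{i+n}$, i.e. $P'_{i+n}=-P_i$ for all $i$. (iii) If $N=2n+1$ is odd and $\tau$ is even, the conjugate billiard coincides with the original one, and $P_i=P'_{i+n}$ for all $i$.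
   Context: A billiard in $e$ with caustic $c$ is a sequence $(P_i)_{i\in\mathbb Z}$ of points of $e$ with $P_{i+1}\neq P_i$ such that every line $[P_i,P_{i+1}]$ is tangent to $c$ and $[P_{i-1},P_i]\neq[P_i,P_{i+1}]$; it is $N$-sided periodic if $P_{i+N}=P_i$ for all $i$, $N$ being the least such positive integer. The vertices are traversed counterclockwise. Let $Q_i$ be the contact point of $[P_i,P_{i+1}]$ with $c$. With $\alpha(x,y)=(\frac{a_e}{a_c}x,\frac{b_e}{b_c}y)$ (so $\alpha(c)=e$), the conjugate billiard is the billiard in $e$ with caustic $c$ with vertices $P_i'=\alpha(Q_i)$. The signed exterior angle $\theta_i$ at $P_i$ is the signed angle from the direction of $P_{i-1}P_i$ to the direction of $P_iP_{i+1}$; for a periodic billiard $\sum_{i=1}^N\theta_i=2\tau\pi$ with $\tau\in\mathbb N$, called the turning number (the number of loops around $O$). *)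

From Stdlib Require Import Reals Lra ZArith.
Open Scope R_scope.

Definition pt := (R * R)%type.

Definition padd (A B : pt) : pt := (fst A + fst B, snd A + snd B).
Definition psub (A B : pt) : pt := (fst A - fst B, snd A - snd B).
Definition popp (A : pt) : pt := (- fst A, - snd A).
Definition pscale (t : R) (A : pt) : pt := (t * fst A, t * snd A).
Definition dot (u v : pt) : R := fst u * fst v + snd u * snd v.
Definition cross (u v : pt) : R := fst u * snd v - snd u * fst v.
Definition pnorm (u : pt) : R := sqrt (dot u u).

Definition on_ellipse (a b : R) (X : pt) : Prop :=
  (fst X)^2 / a^2 + (snd X)^2 / b^2 = 1.

Definition line (A B : pt) (X : pt) : Prop :=
  exists t : R, X = padd A (pscale t (psub B A)).

(* Q is the contact point of the line [A,B] with the ellipse x^2/a^2+y^2/b^2=1: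
   Q lies on the ellipse and on the line, and the line is tangent there
   (its direction is orthogonal to the normal (x/a^2, y/b^2) at Q). *)
Definition contact_point (a b : R) (A B Q : pt) : Prop :=
  on_ellipse a b Q /\ line A B Q /\
  dot (psub B A) (fst Q / a^2, snd Q / b^2) = 0.

Definition tangent_line (a b : R) (A B : pt) : Prop :=
  exists Q, contact_point a b A B Q.

Definition billiard (ae be ac bc : R) (P : Z -> pt) : Prop :=
  forall i : Z,
    on_ellipse ae be (P i) /\
    P (i + 1)%Z <> P i /\
    tangent_line ac bc (P i) (P (i + 1)%Z) /\
    ~ (forall X, line (P (i - 1)%Z) (P i) X <-> line (P i) (P (i + 1)%Z) X).

Definition periodic_with (P : Z -> pt) (N : nat) : Prop :=
  forall i : Z, P (i + Z.of_nat N)%Z = P i.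

Definition least_period (P : Z -> pt) (N : nat) : Prop :=
  (0 < N)%nat /\ periodic_with P N /\
  forall m : nat, (0 < m < N)%nat -> ~ periodic_with P m.

Definition signed_angle (u v : pt) (theta : R) : Prop :=
  - PI < theta <= PI /\
  cos theta * (pnorm u * pnorm v) = dot u v /\
  sin theta * (pnorm u * pnorm v) = cross u v.

Definition exterior_angles (P : Z -> pt) (theta : Z -> R) : Prop :=
  forall i : Z,
    signed_angle (psub (P i) (P (i - 1)%Z)) (psub (P (i + 1)%Z) (P i)) (theta i).

(* Turning number tau (counterclockwise traversal, tau a natural number):
   sum_{i=1}^N theta_i = 2 tau pi. *)
Definition turning_number (P : Z -> pt) (N : nat) (tau : nat) : Prop :=
  exists theta : Z -> R,
    exterior_angles P theta /\
    sum_f_R0 (fun k => theta (Z.of_nat k + 1)%Z) (N - 1) = 2 * INR tau * PI.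

(* The affine map alpha(x,y) = (ae/ac x, be/bc y) sending c onto e. *)
Definition alpha (ae be ac bc : R) (X : pt) : pt :=
  (ae / ac * fst X, be / bc * snd X).

(* Write P_i = (ae cos t_i, be sin t_i) and Q_i = (ac cos s_i, bc sin s_i), so that
   P'_i = (ae cos s_i, be sin s_i).  The side [P_i, P_(i+1)] touches c at Q_i iff
   F (t_i, s_i) = F (t_(i+1), s_i) = 1 for the symmetric form
   F (a, b) = (ae/ac) cos a cos b + (be/bc) sin a sin b, so t_0, s_0, t_1, s_1, ... is a
   single chain z with F (z_k, z_(k+1)) = 1 carrying both billiards.  Since ae > ac and
   be > bc, F (a, .) = 1 has exactly one solution on each side of a, and the successor map
   of the chain is increasing.  For a counterclockwise billiard a lift of z advances by
   less than PI per step, and the telescoping exterior angles show that it advances by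
   exactly 2 tau PI over the 2 N steps of a period.  As F is invariant under shifting both
   arguments by PI, the chain shifted by N steps and by - tau PI is again a chain, and
   monotonicity forces z_(k+N) = z_k + tau PI.  For even k this is (i) when N is even;
   for N = 2 n + 1 it identifies t_i + tau PI with s_(i+n), which gives (ii) and (iii). *)

From Stdlib Require Import Reals ZArith Arith Lra Lia Psatz Zfloor.
Open Scope R_scope.

(** * Angles modulo 2 PI *)

Definition same_angle (a b : R) : Prop := cos a = cos b /\ sin a = sin b.

Lemma cos_add_2IZR_PI (x : R) (k : Z) : cos (x + 2 * IZR k * PI) = cos x.
Proof.
  destruct (Z_le_gt_dec 0 k) as [Hk | Hk].
  - rewrite <- (Z2Nat.id k Hk), <- INR_IZR_INZ. apply cos_period.
  - replace k with (- Z.of_nat (Z.to_nat (- k)))%Z by lia.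
    rewrite opp_IZR, <- INR_IZR_INZ.
    rewrite <- (cos_period _ (Z.to_nat (- k))). f_equal. ring.
Qed.

Lemma sin_add_2IZR_PI (x : R) (k : Z) : sin (x + 2 * IZR k * PI) = sin x.
Proof.
  destruct (Z_le_gt_dec 0 k) as [Hk | Hk].
  - rewrite <- (Z2Nat.id k Hk), <- INR_IZR_INZ. apply sin_period.
  - replace k with (- Z.of_nat (Z.to_nat (- k)))%Z by lia.
    rewrite opp_IZR, <- INR_IZR_INZ.
    rewrite <- (sin_period _ (Z.to_nat (- k))). f_equal. ring.
Qed.

Lemma sin_sub_PI (x : R) : sin (x - PI) = - sin x.
Proof. replace x with ((x - PI) + PI) at 2 by ring. rewrite neg_sin. ring. Qed.

Lemma cos_sin_add_nPI (x : R) (n : nat) :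
  cos (x + PI * INR n) = (-1) ^ n * cos x /\ sin (x + PI * INR n) = (-1) ^ n * sin x.
Proof.
  induction n as [| n [IHc IHs]]; [simpl; rewrite Rmult_0_r, Rplus_0_r; split; ring |].
  rewrite S_INR, <- !tech_pow_Rmult.
  replace (x + PI * (INR n + 1)) with ((x + PI * INR n) + PI) by ring.
  rewrite neg_cos, neg_sin, IHc, IHs. split; ring.
Qed.

Definition mod2PI (a : R) : R := a - 2 * IZR (Zfloor (a / (2 * PI))) * PI.

Lemma mod2PI_bounds (a : R) : 0 <= mod2PI a < 2 * PI.
Proof.
  unfold mod2PI. pose proof PI_RGT_0.
  destruct (Zfloor_bound (a / (2 * PI))) as [H1 H2].
  assert (a = 2 * PI * (a / (2 * PI))) by (field; lra). nra.
Qed.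

Lemma cos_mod2PI (a : R) : cos (mod2PI a) = cos a.
Proof.
  unfold mod2PI. rewrite <- (cos_add_2IZR_PI _ (Zfloor (a / (2 * PI)))). f_equal. ring.
Qed.

Lemma sin_mod2PI (a : R) : sin (mod2PI a) = sin a.
Proof.
  unfold mod2PI. rewrite <- (sin_add_2IZR_PI _ (Zfloor (a / (2 * PI)))). f_equal. ring.
Qed.

Lemma sin_gt_0_inv (y : R) : 0 <= y < 2 * PI -> 0 < sin y -> 0 < y < PI.
Proof.
  intros Hy Hs. pose proof PI_RGT_0.
  destruct (Rlt_or_le y PI) as [L | L].
  - destruct (Req_dec y 0) as [->|]; [rewrite sin_0 in Hs |]; lra.
  - assert (0 <= sin (y - PI)) by (apply sin_ge_0; lra).
    rewrite sin_sub_PI in *. lra.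
Qed.

Lemma eq_of_cos_sin_eq (a b : R) :
  - (2 * PI) < a - b < 2 * PI -> cos a = cos b -> sin a = sin b -> a = b.
Proof.
  intros Hab Hc Hs. pose proof PI_RGT_0.
  assert (Hcos : cos (a - b) = 1).
  { rewrite cos_minus, Hc, Hs. pose proof (sin2_cos2 b). unfold Rsqr in *. lra. }
  assert (Hsin : sin ((a - b) / 2) = 0).
  { assert (cos (a - b) = 1 - 2 * sin ((a - b) / 2) ^ 2) as E.
    { replace (a - b) with (2 * ((a - b) / 2)) at 1 by field. rewrite cos_2a_sin. ring. }
    nra. }
  destruct (sin_eq_0_0 _ Hsin) as [k Hk].
  assert (Hk1 : -1 < IZR k < 1) by (split; apply (Rmult_lt_reg_r PI); nra).
  destruct Hk1 as [Hk1 Hk2]. apply lt_IZR in Hk1, Hk2.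
  replace k with 0%Z in Hk by lia. simpl in Hk. lra.
Qed.

Lemma angle_rep_left (a b : R) : 0 < sin (a - b) -> exists a', same_angle a' a /\ b < a' < b + PI.
Proof.
  intros H. set (d := a - b) in *. replace a with (b + d) by (unfold d; ring).
  exists (b + mod2PI d).
  assert (Hr : 0 < mod2PI d < PI).
  { apply sin_gt_0_inv; [apply mod2PI_bounds | rewrite sin_mod2PI; lra]. }
  unfold same_angle. rewrite !cos_plus, !sin_plus, cos_mod2PI, sin_mod2PI.
  repeat split; lra.
Qed.

(** * The tangency form *)

Definition tangency (A B a b : R) : R := A * cos a * cos b + B * sin a * sin b.

Lemma tangency_sym (A B a b : R) : tangency A B a b = tangency A B b a.
Proof. unfold tangency. ring. Qed.

Lemma tangency_add_PI_l (A B a b : R) : tangency A B (a + PI) b = - tangency A B a b.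
Proof. unfold tangency. rewrite neg_cos, neg_sin. ring. Qed.

Lemma tangency_opp (A B a b : R) : tangency A B (- a) (- b) = tangency A B a b.
Proof. unfold tangency. rewrite !cos_neg, !sin_neg. ring. Qed.

Lemma tangency_add_nPI (A B a b : R) (n : nat) :
  tangency A B (a + PI * INR n) (b + PI * INR n) = tangency A B a b.
Proof.
  unfold tangency.
  destruct (cos_sin_add_nPI a n) as [-> ->]. destruct (cos_sin_add_nPI b n) as [-> ->].
  assert (E : (-1) ^ n * (-1) ^ n = 1).
  { rewrite <- Rpow_mult_distr. replace (-1 * -1) with 1 by ring. apply pow1. }
  transitivity (((-1) ^ n * (-1) ^ n) * (A * cos a * cos b + B * sin a * sin b)); [ring |].
  rewrite E. ring.
Qed.

Lemma tangency_same_angle (A B a b a' b' : R) :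
  same_angle a a' -> same_angle b b' -> tangency A B a b = tangency A B a' b'.
Proof. unfold tangency. intros [-> ->] [-> ->]. reflexivity. Qed.

Section TangencyGeometry.

Variables A B : R.
Hypotheses (HA : 1 < A) (HB : 1 < B).

Lemma tangency_diag_gt_1 (a : R) : 1 < tangency A B a a.
Proof.
  unfold tangency. pose proof (sin2_cos2 a) as E. unfold Rsqr in E.
  assert (0 <= cos a * cos a) by nra. assert (0 <= sin a * sin a) by nra.
  destruct (Rle_or_lt A B); nra.
Qed.

(* With [F = tangency A B t] and [u < v < w], [w - u < PI]:
   [sin (w - u) * F v = sin (w - v) * F u + sin (v - u) * F w] and
   [sin (w - u) <= sin (w - v) + sin (v - u)]. *)
Lemma tangency_interp (t u v w : R) :
  u < v -> v < w -> w - u < PI ->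
  1 <= tangency A B t u -> 1 <= tangency A B t w ->
  1 < tangency A B t u \/ 1 < tangency A B t w ->
  1 < tangency A B t v.
Proof.
  intros Huv Hvw Hwu Hu Hw Hor.
  assert (I : tangency A B t v * sin (w - u) =
              tangency A B t u * sin (w - v) + tangency A B t w * sin (v - u)).
  { unfold tangency. rewrite !sin_minus. ring. }
  assert (s1 : 0 < sin (w - u)) by (apply sin_gt_0; lra).
  assert (s2 : 0 < sin (w - v)) by (apply sin_gt_0; lra).
  assert (s3 : 0 < sin (v - u)) by (apply sin_gt_0; lra).
  assert (sin (w - u) <= sin (w - v) + sin (v - u)).
  { replace (w - u) with ((w - v) + (v - u)) by ring. rewrite sin_plus.
    pose proof (COS_bound (w - v)). pose proof (COS_bound (v - u)). nra. }
  destruct Hor; nra.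
Qed.

Lemma tangency_unique_right (t s1 s2 : R) :
  tangency A B t s1 = 1 -> tangency A B t s2 = 1 ->
  t < s1 < t + PI -> t < s2 < t + PI -> s1 = s2.
Proof.
  intros E1 E2 R1 R2. pose proof (tangency_diag_gt_1 t).
  destruct (Rtotal_order s1 s2) as [L | [L | L]]; auto; exfalso.
  - assert (1 < tangency A B t s1) by (apply (tangency_interp t t s1 s2); lra). lra.
  - assert (1 < tangency A B t s2) by (apply (tangency_interp t t s2 s1); lra). lra.
Qed.

Lemma tangency_side_unique_pos (a b c : R) :
  tangency A B b a = 1 -> tangency A B b c = 1 ->
  0 < sin (a - b) -> 0 < sin (c - b) -> same_angle a c.
Proof.
  intros Ea Ec Sa Sc.
  destruct (angle_rep_left a b Sa) as [a' [[Ca Sa'] Ra]].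
  destruct (angle_rep_left c b Sc) as [c' [[Cc Sc'] Rc]].
  assert (a' = c') as <-.
  { apply (tangency_unique_right b); [rewrite <- Ea | rewrite <- Ec | auto | auto];
      apply tangency_same_angle; split; auto. }
  split; congruence.
Qed.

Lemma tangency_side_unique (a b c : R) :
  tangency A B b a = 1 -> tangency A B b c = 1 ->
  0 < sin (a - b) * sin (c - b) -> same_angle a c.
Proof.
  intros Ea Ec S.
  destruct (Rlt_or_le 0 (sin (a - b))) as [Sa | Sa].
  { apply (tangency_side_unique_pos _ b); auto. nra. }
  assert (Hopp : forall x, sin (- x - - b) = - sin (x - b))
    by (intro x; rewrite <- sin_neg; f_equal; ring).
  assert (Sa_neg : sin (a - b) < 0).
  { destruct (Req_dec (sin (a - b)) 0) as [E | E]; [rewrite E in S |]; lra. }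
  assert (Sc_neg : sin (c - b) < 0) by nra.
  destruct (tangency_side_unique_pos (- a) (- b) (- c)) as [C S'];
    rewrite ?tangency_opp, ?Hopp; auto; try lra.
  rewrite !cos_neg in C. rewrite !sin_neg in S'. split; lra.
Qed.

Lemma tangency_two_steps (a b c : R) :
  tangency A B a b = 1 -> tangency A B b c = 1 ->
  a < b < a + PI -> b < c < b + PI -> c < a + PI.
Proof.
  intros E1 E2 R1 R2.
  destruct (Rlt_or_le c (a + PI)) as [L | L]; auto. exfalso.
  pose proof (tangency_diag_gt_1 b).
  assert (Ea : tangency A B b (a + PI) = -1).
  { rewrite tangency_sym, tangency_add_PI_l, E1. ring. }
  destruct (Req_dec c (a + PI)) as [-> | E]; [lra |].
  assert (1 < tangency A B b (a + PI)) by (apply (tangency_interp b b (a + PI) c); lra).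
  lra.
Qed.

Lemma tangency_mono (x x' y y' : R) :
  tangency A B x x' = 1 -> x < x' < x + PI ->
  tangency A B y y' = 1 -> y < y' < y + PI ->
  x < y -> x' < y'.
Proof.
  intros E1 R1 E2 R2 L.
  destruct (Rlt_or_le y x') as [L2 | L2]; [| lra].
  pose proof (tangency_diag_gt_1 x'). pose proof (tangency_diag_gt_1 y).
  assert (G : 1 < tangency A B x' y).
  { apply (tangency_interp x' x y x'); rewrite ?(tangency_sym A B x' x); lra. }
  destruct (Rlt_or_le x' y') as [L3 | L3]; auto. exfalso.
  destruct (Req_dec y' x') as [-> | E].
  - rewrite tangency_sym in G. lra.
  - assert (1 < tangency A B y y')
      by (apply (tangency_interp y y y' x'); rewrite ?(tangency_sym A B y x'); lra).
    lra.
Qed.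

Lemma tangency_sin_neq_0 (a b : R) : tangency A B a b = 1 -> sin (b - a) <> 0.
Proof.
  intros E S.
  assert (C2 : cos (b - a) * cos (b - a) = 1).
  { pose proof (sin2_cos2 (b - a)). unfold Rsqr in *. rewrite S in *. lra. }
  assert (Hc : cos b = cos (b - a) * cos a).
  { replace b with ((b - a) + a) at 1 by ring. rewrite cos_plus, S. ring. }
  assert (Hs : sin b = cos (b - a) * sin a).
  { replace b with ((b - a) + a) at 1 by ring. rewrite sin_plus, S. ring. }
  pose proof (tangency_diag_gt_1 a) as D.
  unfold tangency in E, D. rewrite Hc, Hs in E.
  set (c := cos (b - a)) in *. set (K := A * cos a * cos a + B * sin a * sin a) in *.
  assert (c * K = 1) by (unfold K; rewrite <- E; ring).
  nra.
Qed.

End TangencyGeometry.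

(** * Tangency chains *)

Definition tangency_chain (A B : R) (z : nat -> R) : Prop :=
  forall k, tangency A B (z k) (z (S k)) = 1.

Lemma sin_sub_same_angle (a b a' b' : R) :
  same_angle a a' -> same_angle b b' -> sin (b - a) = sin (b' - a').
Proof. intros [Ca Sa] [Cb Sb]. rewrite !sin_minus, Ca, Sa, Cb, Sb. reflexivity. Qed.

Lemma cos_sub_same_angle (a b a' b' : R) :
  same_angle a a' -> same_angle b b' -> cos (b - a) = cos (b' - a').
Proof. intros [Ca Sa] [Cb Sb]. rewrite !cos_minus, Ca, Sa, Cb, Sb. reflexivity. Qed.

Lemma tangency_chain_opp (A B : R) (z : nat -> R) :
  tangency_chain A B z -> tangency_chain A B (fun k => - z k).
Proof. intros Hz k. rewrite tangency_opp. apply Hz. Qed.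

Fixpoint lift (z : nat -> R) (k : nat) : R :=
  match k with
  | O => z O
  | S k' => lift z k' + mod2PI (z (S k') - lift z k')
  end.

Lemma lift_same_angle (z : nat -> R) (k : nat) : same_angle (lift z k) (z k).
Proof.
  destruct k as [| k]; [split; reflexivity |]. simpl.
  set (d := z (S k) - lift z k). replace (z (S k)) with (lift z k + d) by (unfold d; ring).
  split; rewrite ?cos_plus, ?sin_plus, ?cos_mod2PI, ?sin_mod2PI; reflexivity.
Qed.

Section Lift.

Variable z : nat -> R.
Hypothesis Hsteps : forall k, 0 < sin (z (S k) - z k).

Lemma lift_step (k : nat) : lift z k < lift z (S k) < lift z k + PI.
Proof.
  simpl. set (d := z (S k) - lift z k).
  assert (0 < mod2PI d < PI); [| lra].
  apply sin_gt_0_inv; [apply mod2PI_bounds |].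
  rewrite sin_mod2PI. unfold d.
  rewrite (sin_sub_same_angle _ _ (z k) (z (S k))); [apply Hsteps | apply lift_same_angle |].
  split; reflexivity.
Qed.

Lemma lift_periodic (p : nat) : (forall k, z (k + p)%nat = z k) ->
  forall k, lift z (k + p) = lift z k + (lift z p - lift z O).
Proof.
  intros Hper k. induction k as [| k IH]; [simpl; ring |].
  replace (S k + p)%nat with (S (k + p)) by lia.
  assert (Hinc : mod2PI (z (S (k + p)) - lift z (k + p)) = mod2PI (z (S k) - lift z k)).
  { pose proof (lift_step (k + p)). pose proof (lift_step k). simpl in *.
    assert (Ez : same_angle (z (S (k + p))) (z (S k)))
      by (replace (S (k + p)) with (S k + p)%nat by lia; rewrite Hper; split; reflexivity).
    assert (El : same_angle (lift z (k + p)) (lift z k)).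
    { destruct (lift_same_angle z (k + p)) as [C1 S1], (lift_same_angle z k) as [C2 S2].
      rewrite Hper in C1, S1. split; congruence. }
    apply eq_of_cos_sin_eq; [lra | |]; rewrite ?cos_mod2PI, ?sin_mod2PI.
    - apply cos_sub_same_angle; auto.
    - apply sin_sub_same_angle; auto. }
  cbn [lift] in IH |- *. lra.
Qed.

End Lift.

Section Chain.

Variables A B : R.
Hypotheses (HA : 1 < A) (HB : 1 < B).

Lemma lift_tangency_chain (z : nat -> R) :
  tangency_chain A B z -> tangency_chain A B (lift z).
Proof.
  intros Hz k. rewrite <- (Hz k).
  apply tangency_same_angle; apply lift_same_angle.
Qed.

Lemma tangency_chain_steps_same_sign (z : nat -> R) :
  tangency_chain A B z -> (forall k, ~ same_angle (z k) (z (S (S k)))) ->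
  forall k, 0 < sin (z (S k) - z k) * sin (z (S (S k)) - z (S k)).
Proof.
  intros Hz Hnd k.
  assert (N1 : sin (z (S k) - z k) <> 0) by (apply (tangency_sin_neq_0 A B); auto).
  assert (N2 : sin (z (S (S k)) - z (S k)) <> 0) by (apply (tangency_sin_neq_0 A B); auto).
  assert (Hle : ~ 0 < sin (z k - z (S k)) * sin (z (S (S k)) - z (S k))).
  { intro Hs. apply (Hnd k), (tangency_side_unique A B HA HB _ (z (S k))); auto.
    rewrite tangency_sym. apply Hz. }
  replace (z k - z (S k)) with (- (z (S k) - z k)) in Hle by ring.
  rewrite sin_neg in Hle.
  rewrite Ropp_mult_distr_l_reverse in Hle.
  pose proof (Rmult_integral_contrapositive_currified _ _ N1 N2). lra.
Qed.

Lemma tangency_chain_steps_pos (z : nat -> R) :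
  tangency_chain A B z -> (forall k, ~ same_angle (z k) (z (S (S k)))) ->
  0 < sin (z 1%nat - z O) -> forall k, 0 < sin (z (S k) - z k).
Proof.
  intros Hz Hnd H0 k. induction k as [| k IH]; auto.
  pose proof (tangency_chain_steps_same_sign z Hz Hnd k). nra.
Qed.

Lemma tangency_chain_two_steps_pos (z : nat -> R) :
  tangency_chain A B z -> (forall k, 0 < sin (z (S k) - z k)) ->
  forall k, 0 < sin (z (S (S k)) - z k).
Proof.
  intros Hz Hpos k.
  rewrite <- (sin_sub_same_angle (lift z k) (lift z (S (S k)))) by apply lift_same_angle.
  pose proof (lift_step z Hpos k). pose proof (lift_step z Hpos (S k)).
  pose proof (tangency_two_steps A B HA HB _ _ _
                (lift_tangency_chain z Hz k) (lift_tangency_chain z Hz (S k))).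
  apply sin_gt_0; lra.
Qed.

Lemma tangency_chain_two_steps_sign (z : nat -> R) :
  tangency_chain A B z -> (forall k, ~ same_angle (z k) (z (S (S k)))) ->
  forall k, 0 < sin (z 1%nat - z O) * sin (z (S (S k)) - z k).
Proof.
  intros Hz Hnd k.
  assert (N0 : sin (z 1%nat - z O) <> 0) by (apply (tangency_sin_neq_0 A B); auto).
  destruct (Rlt_or_le 0 (sin (z 1%nat - z O))) as [Hpos | Hneg].
  - pose proof (tangency_chain_two_steps_pos z Hz (tangency_chain_steps_pos z Hz Hnd Hpos) k)
      as H2. nra.
  - set (w := fun k => - z k).
    assert (Hsin : forall i j, sin (w i - w j) = - sin (z i - z j)).
    { intros i j. unfold w. rewrite <- sin_neg. f_equal. ring. }
    assert (Hw : tangency_chain A B w) by (apply tangency_chain_opp; auto).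
    assert (Hndw : forall k, ~ same_angle (w k) (w (S (S k)))).
    { intros j [C S]. apply (Hnd j). unfold w in C, S.
      rewrite !cos_neg in C. rewrite !sin_neg in S. split; lra. }
    assert (Hw1 : 0 < sin (w 1%nat - w O)) by (rewrite Hsin; lra).
    pose proof (tangency_chain_two_steps_pos w Hw (tangency_chain_steps_pos w Hw Hndw Hw1) k)
      as H2. rewrite Hsin in H2. nra.
Qed.

(* If a real chain advancing by less than [PI] per step advances by [2 c] in [2 M] steps,
   then comparing it with its own shift [k |-> w (k + M) - c], which is again a chain,
   monotonicity forces it to advance by exactly [c] in [M] steps. *)
Lemma tangency_chain_half_period (w : nat -> R) (M n : nat) :
  tangency_chain A B w -> (forall k, w k < w (S k) < w k + PI) ->
  w (2 * M)%nat = w O + 2 * (PI * INR n) -> w M = w O + PI * INR n.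
Proof.
  intros Hw Hst Hper. set (c := PI * INR n) in *.
  set (y := fun k => w (k + M)%nat - c).
  assert (Hy : tangency_chain A B y).
  { intro k. unfold y, c. rewrite <- (tangency_add_nPI A B _ _ n).
    replace (S k + M)%nat with (S (k + M)) by lia.
    replace (w (k + M)%nat - PI * INR n + PI * INR n) with (w (k + M)%nat) by ring.
    replace (w (S (k + M)) - PI * INR n + PI * INR n) with (w (S (k + M))) by ring.
    apply Hw. }
  assert (Hyst : forall k, y k < y (S k) < y k + PI).
  { intro k. unfold y. replace (S k + M)%nat with (S (k + M)) by lia.
    specialize (Hst (k + M)%nat). lra. }
  assert (yM : y M = w O + c) by (unfold y; replace (M + M)%nat with (2 * M)%nat by lia; lra).
  assert (y0 : y O = w M - c) by reflexivity.
  destruct (Rtotal_order (w O) (y O)) as [L | [L | L]]; [| lra |].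
  - assert (Hlt : forall k, w k < y k).
    { induction k; auto. apply (tangency_mono A B HA HB (w k) _ (y k)); auto. }
    specialize (Hlt M). lra.
  - assert (Hlt : forall k, y k < w k).
    { induction k; auto. apply (tangency_mono A B HA HB (y k) _ (w k)); auto. }
    specialize (Hlt M). lra.
Qed.

End Chain.

Definition interleave (t s : nat -> R) (k : nat) : R :=
  if Nat.even k then t (Nat.div2 k) else s (Nat.div2 k).

Lemma interleave_even (t s : nat -> R) (i : nat) : interleave t s (2 * i) = t i.
Proof. unfold interleave. rewrite Nat.even_even, Nat.div2_double. reflexivity. Qed.

Lemma interleave_odd (t s : nat -> R) (i : nat) : interleave t s (S (2 * i)) = s i.
Proof.
  unfold interleave. replace (S (2 * i)) with (2 * i + 1)%nat by lia.
  rewrite Nat.even_odd, Nat.div2_odd'. reflexivity.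
Qed.

Lemma nat_even_or_odd (k : nat) : (exists i, k = 2 * i)%nat \/ (exists i, k = S (2 * i))%nat.
Proof. destruct (Nat.Even_or_Odd k) as [[i H] | [i H]]; [left | right]; exists i; lia. Qed.

Lemma interleave_tangency_chain (A B : R) (t s : nat -> R) :
  (forall i, tangency A B (t i) (s i) = 1) -> (forall i, tangency A B (t (S i)) (s i) = 1) ->
  tangency_chain A B (interleave t s).
Proof.
  intros H1 H2 k. destruct (nat_even_or_odd k) as [[i ->] | [i ->]].
  - rewrite interleave_even, interleave_odd. apply H1.
  - replace (S (S (2 * i))) with (2 * S i)%nat by lia.
    rewrite interleave_even, interleave_odd, tangency_sym. apply H2.
Qed.

Lemma interleave_nondegenerate (t s : nat -> R) :
  (forall i, ~ same_angle (t i) (t (S i))) -> (forall i, ~ same_angle (s i) (s (S i))) ->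
  forall k, ~ same_angle (interleave t s k) (interleave t s (S (S k))).
Proof.
  intros Ht Hs k. destruct (nat_even_or_odd k) as [[i ->] | [i ->]].
  - replace (S (S (2 * i))) with (2 * S i)%nat by lia. rewrite !interleave_even. apply Ht.
  - replace (S (S (S (2 * i)))) with (S (2 * S i)) by lia. rewrite !interleave_odd. apply Hs.
Qed.

Lemma interleave_periodic (t s : nat -> R) (N : nat) :
  (forall i, t (i + N)%nat = t i) -> (forall i, s (i + N)%nat = s i) ->
  forall k, interleave t s (k + 2 * N) = interleave t s k.
Proof.
  intros Ht Hs k. destruct (nat_even_or_odd k) as [[i ->] | [i ->]].
  - replace (2 * i + 2 * N)%nat with (2 * (i + N))%nat by lia. rewrite !interleave_even. apply Ht.
  - replace (S (2 * i) + 2 * N)%nat with (S (2 * (i + N))) by lia.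
    rewrite !interleave_odd. apply Hs.
Qed.

(** * Ellipses, tangents and chords *)

Definition ell_point (a b t : R) : pt := (a * cos t, b * sin t).

Definition angle_of (u v : R) : R := if Rle_dec 0 v then acos u else - acos u.

Lemma cos_sin_angle_of (u v : R) : u * u + v * v = 1 ->
  cos (angle_of u v) = u /\ sin (angle_of u v) = v.
Proof.
  intros H. assert (Hu : -1 <= u <= 1) by (split; nra).
  assert (Hs : sqrt (1 - u²) = Rabs v).
  { replace (1 - u²) with (v²) by (unfold Rsqr; lra). apply sqrt_Rsqr_abs. }
  unfold angle_of. destruct (Rle_dec 0 v).
  - rewrite cos_acos, sin_acos, Hs, Rabs_right; auto; lra.
  - rewrite cos_neg, sin_neg, cos_acos, sin_acos, Hs, Rabs_left; auto; lra.
Qed.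

Definition ecc_angle (a b : R) (X : pt) : R := angle_of (fst X / a) (snd X / b).

Lemma on_ellipse_ecc_angle (a b : R) (X : pt) : 0 < a -> 0 < b -> on_ellipse a b X ->
  X = ell_point a b (ecc_angle a b X).
Proof.
  destruct X as [x y]. unfold on_ellipse, ell_point, ecc_angle. cbn [fst snd].
  intros Ha Hb H.
  assert (E : (x / a) * (x / a) + (y / b) * (y / b) = 1) by (rewrite <- H; field; lra).
  destruct (cos_sin_angle_of _ _ E) as [-> ->]. f_equal; field; lra.
Qed.

Lemma alpha_ell_point (ae be ac bc s : R) : ac <> 0 -> bc <> 0 ->
  alpha ae be ac bc (ell_point ac bc s) = ell_point ae be s.
Proof. intros. unfold alpha, ell_point. cbn [fst snd]. f_equal; field; auto. Qed.

Lemma ell_point_scale (a b u v c : R) : cos u = c * cos v -> sin u = c * sin v ->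
  ell_point a b u = pscale c (ell_point a b v).
Proof. intros Hc Hs. unfold ell_point, pscale. cbn [fst snd]. rewrite Hc, Hs. f_equal; ring. Qed.

Definition polar_normal (a b : R) (Q : pt) : pt := (fst Q / a ^ 2, snd Q / b ^ 2).

Lemma dot_ell_point_polar_normal (ae be ac bc t s : R) : ac <> 0 -> bc <> 0 ->
  dot (ell_point ae be t) (polar_normal ac bc (ell_point ac bc s)) =
  tangency (ae / ac) (be / bc) t s.
Proof. intros. unfold dot, ell_point, polar_normal, tangency. cbn [fst snd]. field. auto. Qed.

Lemma on_ellipse_dot_polar_normal (a b : R) (Q : pt) : 0 < a -> 0 < b ->
  on_ellipse a b Q -> dot Q (polar_normal a b Q) = 1.
Proof.
  destruct Q as [x y]. unfold on_ellipse, dot, polar_normal. cbn [fst snd].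
  intros Ha Hb H. rewrite <- H. field. lra.
Qed.

Lemma polar_normal_neq_0 (a b : R) (Q : pt) : 0 < a -> 0 < b ->
  on_ellipse a b Q -> polar_normal a b Q <> (0, 0).
Proof.
  intros Ha Hb HQ E. pose proof (on_ellipse_dot_polar_normal a b Q Ha Hb HQ) as H.
  rewrite E in H. unfold dot in H. cbn [fst snd] in H. lra.
Qed.

Lemma line_dot (A B X n : pt) : line A B X -> dot A n = 1 -> dot B n = 1 -> dot X n = 1.
Proof.
  intros [t ->]. unfold dot, padd, pscale, psub. cbn [fst snd]. intros HA HB.
  transitivity ((1 - t) * (fst A * fst n + snd A * snd n) + t * (fst B * fst n + snd B * snd n));
    [ring | rewrite HA, HB; ring].
Qed.

Lemma contact_point_dot (a b : R) (A B Q : pt) : 0 < a -> 0 < b ->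
  contact_point a b A B Q -> dot A (polar_normal a b Q) = 1 /\ dot B (polar_normal a b Q) = 1.
Proof.
  intros Ha Hb [HQ [[t Ht] Hd]].
  pose proof (on_ellipse_dot_polar_normal a b Q Ha Hb HQ) as E.
  fold (polar_normal a b Q) in Hd. set (n := polar_normal a b Q) in *.
  rewrite Ht in E.
  assert (E' : dot A n + t * dot (psub B A) n = 1)
    by (rewrite <- E; unfold dot, padd, pscale, psub; cbn [fst snd]; ring).
  rewrite Hd, Rmult_0_r, Rplus_0_r in E'. split; auto.
  unfold dot, psub in *; cbn [fst snd] in *. lra.
Qed.

(* Uniqueness of the tangency point: if [Q2] lies on the tangent at [Q1], then
   [|Q2 - Q1|^2] in the metric of the ellipse is [2 - 2 <Q2, n(Q1)> = 0]. *)
Lemma contact_point_unique (a b : R) (A B Q1 Q2 : pt) : 0 < a -> 0 < b ->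
  contact_point a b A B Q1 -> contact_point a b A B Q2 -> Q1 = Q2.
Proof.
  intros Ha Hb H1 H2.
  destruct (contact_point_dot a b A B Q1 Ha Hb H1) as [DA DB].
  assert (K : dot Q2 (polar_normal a b Q1) = 1) by (apply (line_dot A B); auto; apply H2).
  destruct H1 as [On1 _], H2 as [On2 _].
  destruct Q1 as [px py], Q2 as [qx qy].
  unfold on_ellipse, dot, polar_normal in *. cbn [fst snd] in *.
  assert (Z : (qx / a - px / a)² + (qy / b - py / b)² = 0).
  { unfold Rsqr. transitivity ((px ^ 2 / a ^ 2 + py ^ 2 / b ^ 2) + (qx ^ 2 / a ^ 2 + qy ^ 2 / b ^ 2)
                               - 2 * (qx * (px / a ^ 2) + qy * (py / b ^ 2))); [field; lra |].
    rewrite On1, On2, K. ring. }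
  destruct (Rplus_sqr_eq_0 _ _ Z) as [Zx Zy].
  f_equal; [apply (Rmult_eq_reg_r (/ a)) | apply (Rmult_eq_reg_r (/ b))];
    unfold Rdiv in *; try lra; apply Rinv_neq_0_compat; lra.
Qed.

Lemma line_iff_dot (A B n X : pt) : A <> B -> dot A n = 1 -> dot B n = 1 -> n <> (0, 0) ->
  (line A B X <-> dot X n = 1).
Proof.
  intros Hne HA HB Hn. split; [intro; apply (line_dot A B); auto |].
  destruct A as [ax ay], B as [bx by'], n as [nx ny], X as [x y].
  unfold line, dot, padd, psub, pscale in *. cbn [fst snd] in *. intros HX.
  set (d := (bx - ax)² + (by' - ay)²).
  assert (Hd : d <> 0).
  { intro Z. apply Hne. destruct (Rplus_sqr_eq_0 _ _ Z). f_equal; lra. }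
  assert (Ex : (bx - ax) * nx + (by' - ay) * ny = 0) by lra.
  assert (Ew : (x - ax) * nx + (y - ay) * ny = 0) by lra.
  assert (Cr : (bx - ax) * (y - ay) - (by' - ay) * (x - ax) = 0).
  { destruct (Req_dec nx 0) as [Z | Z].
    - assert (ny <> 0) by (intro; apply Hn; subst; reflexivity). subst nx.
      assert (Eb : by' - ay = 0) by (apply (Rmult_eq_reg_r ny); lra).
      assert (Ey : y - ay = 0) by (apply (Rmult_eq_reg_r ny); lra).
      rewrite Eb, Ey. ring.
    - apply (Rmult_eq_reg_r nx); auto.
      transitivity ((y - ay) * ((bx - ax) * nx + (by' - ay) * ny)
                    - (by' - ay) * ((x - ax) * nx + (y - ay) * ny)); [ring |].
      rewrite Ex, Ew. ring. }
  exists (((x - ax) * (bx - ax) + (y - ay) * (by' - ay)) / d).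
  f_equal; apply (Rmult_eq_reg_r d); auto; field_simplify; auto; unfold d, Rsqr.
  - pose proof (f_equal (Rmult (by' - ay)) Cr) as H. ring_simplify in H. lra.
  - pose proof (f_equal (Rmult (bx - ax)) Cr) as H. ring_simplify in H. lra.
Qed.

Definition ell_tangent (a b s : R) : pt := (- a * sin s, b * cos s).

(* The [atan] term is the angle from the unit tangent [(- sin u, cos u)] of the circle to
   [ell_tangent a b u], so this is an argument of [ell_tangent a b u] that varies
   continuously with [u] and stays within [PI / 2] of [PI / 2 + u]. *)
Definition tangent_arg (a b u : R) : R :=
  PI / 2 + u + atan ((a - b) * sin u * cos u / (b * cos u ^ 2 + a * sin u ^ 2)).

Lemma pnorm_pscale (l : R) (X : pt) : pnorm (pscale l X) = Rabs l * pnorm X.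
Proof.
  destruct X as [x y]. unfold pnorm, dot, pscale. cbn [fst snd].
  replace (l * x * (l * x) + l * y * (l * y)) with (l² * (x * x + y * y)) by (unfold Rsqr; ring).
  rewrite sqrt_mult_alt, sqrt_Rsqr_abs; [reflexivity | apply Rle_0_sqr].
Qed.

Lemma ellipse_weight_pos (a b u : R) : 0 < a -> 0 < b -> 0 < b * cos u ^ 2 + a * sin u ^ 2.
Proof.
  intros Ha Hb. pose proof (sin2_cos2 u) as E. unfold Rsqr in E.
  assert (0 <= sin u * sin u) by nra. assert (0 <= cos u * cos u) by nra.
  destruct (Rle_or_lt (sin u * sin u) (1 / 2)); nra.
Qed.

Lemma pnorm_ell_tangent_pos (a b u : R) : 0 < a -> 0 < b -> 0 < pnorm (ell_tangent a b u).
Proof.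
  intros Ha Hb. unfold pnorm, dot, ell_tangent. cbn [fst snd]. apply sqrt_lt_R0.
  pose proof (sin2_cos2 u) as E. unfold Rsqr in E.
  destruct (Rle_or_lt (sin u * sin u) (1 / 2)); nra.
Qed.

Lemma cos_sin_tangent_arg (a b u : R) : 0 < a -> 0 < b ->
  cos (tangent_arg a b u) * pnorm (ell_tangent a b u) = - a * sin u /\
  sin (tangent_arg a b u) * pnorm (ell_tangent a b u) = b * cos u.
Proof.
  intros Ha Hb. pose proof (sin2_cos2 u) as SC. unfold Rsqr in SC.
  pose proof (ellipse_weight_pos a b u Ha Hb) as HD.
  unfold tangent_arg, pnorm, dot, ell_tangent. cbn [fst snd].
  set (s := sin u) in *. set (c := cos u) in *. set (D := b * c ^ 2 + a * s ^ 2) in *.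
  set (g := (a - b) * s * c / D).
  assert (Hr : sqrt (1 + g²) * D = sqrt (- a * s * (- a * s) + b * c * (b * c))).
  { rewrite <- (sqrt_Rsqr D) by lra.
    rewrite <- sqrt_mult_alt by (pose proof (Rle_0_sqr g); lra).
    f_equal. unfold g, Rsqr. field_simplify; [| lra]. unfold D.
    transitivity ((b * b * (c * c) + a * a * (s * s)) * (s * s + c * c)); [ring |].
    rewrite SC. ring. }
  assert (Hpos : 0 < sqrt (1 + g²)) by (apply sqrt_lt_R0; pose proof (Rle_0_sqr g); lra).
  replace (PI / 2 + u + atan g) with (PI / 2 + (u + atan g)) by ring.
  repeat first [rewrite cos_plus | rewrite sin_plus].
  rewrite cos_PI2, sin_PI2, cos_atan, sin_atan.
  fold s c. rewrite <- Hr.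
  assert (K1 : (s + c * g) * D = a * s).
  { unfold g. field_simplify; [| lra]. unfold D.
    transitivity (a * s * (s * s + c * c)); [ring | rewrite SC; ring]. }
  assert (K2 : (c - s * g) * D = b * c).
  { unfold g. field_simplify; [| lra]. unfold D.
    transitivity (b * c * (s * s + c * c)); [ring | rewrite SC; ring]. }
  set (r := sqrt (1 + g²)) in *. clearbody s c D g r.
  split.
  - transitivity (- ((s + c * g) * D)); [field; lra | rewrite K1; ring].
  - transitivity ((c - s * g) * D); [field; lra | exact K2].
Qed.

Lemma tangent_arg_same_angle (a b u v : R) :
  same_angle u v -> tangent_arg a b u - tangent_arg a b v = u - v.
Proof. intros [C S]. unfold tangent_arg. rewrite C, S. ring. Qed.

Lemma ell_tangent_same_angle (a b u v : R) :
  same_angle u v -> ell_tangent a b u = ell_tangent a b v.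
Proof. intros [C S]. unfold ell_tangent. rewrite C, S. reflexivity. Qed.

Lemma chord_parallel_tangent (ae be ac bc t t' s : R) : 0 < ac -> 0 < bc ->
  tangency (ae / ac) (be / bc) t s = 1 -> tangency (ae / ac) (be / bc) t' s = 1 ->
  psub (ell_point ae be t') (ell_point ae be t) =
  pscale (ae * be / (ac * bc) * sin (t' - t)) (ell_tangent ac bc s).
Proof.
  intros Ha Hb E1 E2. unfold tangency, psub, pscale, ell_point, ell_tangent in *. cbn [fst snd].
  replace (ae * be / (ac * bc) * sin (t' - t)) with (ae * be * sin (t' - t) / (ac * bc))
    by (field; nra).
  rewrite sin_minus.
  assert (Pn : ae * cos t * (cos s / ac) + be * sin t * (sin s / bc) = 1)
    by (rewrite <- E1; field; lra).
  assert (En : (ae * cos t' - ae * cos t) * (cos s / ac)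
               + (be * sin t' - be * sin t) * (sin s / bc) = 0).
  { transitivity ((ae / ac * cos t' * cos s + be / bc * sin t' * sin s)
                  - (ae / ac * cos t * cos s + be / bc * sin t * sin s)); [field; lra |].
    rewrite E1, E2. ring. }
  replace (ae * be * (sin t' * cos t - cos t' * sin t)) with
    ((ae * cos t) * (be * sin t' - be * sin t) - (be * sin t) * (ae * cos t' - ae * cos t)) by ring.
  set (ex := ae * cos t' - ae * cos t) in *. set (ey := be * sin t' - be * sin t) in *.
  set (px := ae * cos t) in *. set (py := be * sin t) in *.
  clearbody px py ex ey.
  f_equal; apply (Rmult_eq_reg_l (ac * bc)); try nra.
  - transitivity ((ac * bc * (px * (cos s / ac) + py * (sin s / bc))) * ex); [rewrite Pn; ring |].
    transitivity ((ac * bc * (ex * (cos s / ac) + ey * (sin s / bc))) * px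
                  + (px * ey - py * ex) * (- ac * sin s)); [field; lra |].
    rewrite En. field. lra.
  - transitivity ((ac * bc * (px * (cos s / ac) + py * (sin s / bc))) * ey); [rewrite Pn; ring |].
    transitivity ((ac * bc * (ex * (cos s / ac) + ey * (sin s / bc))) * py
                  + (px * ey - py * ex) * (bc * cos s)); [field; lra |].
    rewrite En. field. lra.
Qed.

Lemma signed_angle_ell_tangent (a b u v l1 l2 th : R) : 0 < a -> 0 < b -> 0 < l1 * l2 ->
  signed_angle (pscale l1 (ell_tangent a b u)) (pscale l2 (ell_tangent a b v)) th ->
  cos th * (pnorm (ell_tangent a b u) * pnorm (ell_tangent a b v))
    = dot (ell_tangent a b u) (ell_tangent a b v) /\
  sin th * (pnorm (ell_tangent a b u) * pnorm (ell_tangent a b v)) = a * b * sin (v - u).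
Proof.
  intros Ha Hb Hl [_ [C S]]. rewrite !pnorm_pscale in C, S.
  assert (Habs : Rabs l1 * Rabs l2 = l1 * l2) by (rewrite <- Rabs_mult; apply Rabs_right; lra).
  set (nu := pnorm (ell_tangent a b u)) in *. set (nv := pnorm (ell_tangent a b v)) in *.
  unfold dot, cross, pscale, ell_tangent in *. cbn [fst snd] in *.
  split; apply (Rmult_eq_reg_l (l1 * l2)); try lra; rewrite <- Habs at 1.
  - transitivity (cos th * (Rabs l1 * nu * (Rabs l2 * nv))); [ring |]. rewrite C. ring.
  - transitivity (sin th * (Rabs l1 * nu * (Rabs l2 * nv))); [ring |]. rewrite S, sin_minus. ring.
Qed.

Lemma signed_angle_ell_tangent_eq (a b u v l1 l2 th : R) : 0 < a -> 0 < b -> 0 < l1 * l2 ->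
  signed_angle (pscale l1 (ell_tangent a b u)) (pscale l2 (ell_tangent a b v)) th ->
  0 < v - u < PI -> th = tangent_arg a b v - tangent_arg a b u.
Proof.
  intros Ha Hb Hl HS Hvu. pose proof HS as [Rth _].
  destruct (signed_angle_ell_tangent a b u v l1 l2 th Ha Hb Hl HS) as [C S].
  pose proof (pnorm_ell_tangent_pos a b u Ha Hb) as Nu.
  pose proof (pnorm_ell_tangent_pos a b v Ha Hb) as Nv.
  destruct (cos_sin_tangent_arg a b u Ha Hb) as [Cu Su].
  destruct (cos_sin_tangent_arg a b v Ha Hb) as [Cv Sv].
  set (nu := pnorm (ell_tangent a b u)) in *. set (nv := pnorm (ell_tangent a b v)) in *.
  set (d := tangent_arg a b v - tangent_arg a b u).
  assert (Cd : cos d * (nu * nv) = cos th * (nu * nv)).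
  { rewrite C. unfold d. rewrite cos_minus.
    transitivity ((cos (tangent_arg a b v) * nv) * (cos (tangent_arg a b u) * nu)
                  + (sin (tangent_arg a b v) * nv) * (sin (tangent_arg a b u) * nu)); [ring |].
    rewrite Cu, Su, Cv, Sv. unfold dot, ell_tangent. cbn [fst snd]. ring. }
  assert (Sd : sin d * (nu * nv) = sin th * (nu * nv)).
  { rewrite S. unfold d. rewrite sin_minus, (sin_minus v u).
    transitivity ((sin (tangent_arg a b v) * nv) * (cos (tangent_arg a b u) * nu)
                  - (cos (tangent_arg a b v) * nv) * (sin (tangent_arg a b u) * nu)); [ring |].
    rewrite Cu, Su, Cv, Sv. ring. }
  assert (NN : 0 < nu * nv) by nra.
  apply Rmult_eq_reg_r in Cd, Sd; try lra.
  assert (Sth : 0 < sin th * (nu * nv))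
    by (rewrite S; apply Rmult_lt_0_compat; [nra | apply sin_gt_0; lra]).
  assert (Rd : v - u - PI < d < v - u + PI).
  { unfold d, tangent_arg.
    pose proof (atan_bound ((a - b) * sin u * cos u / (b * cos u ^ 2 + a * sin u ^ 2))).
    pose proof (atan_bound ((a - b) * sin v * cos v / (b * cos v ^ 2 + a * sin v ^ 2))). lra. }
  assert (0 < th).
  { destruct (Rle_or_lt th 0) as [L | L]; auto.
    assert (0 <= sin (- th)) by (apply sin_ge_0; lra). rewrite sin_neg in *.
    nra. }
  symmetry. apply eq_of_cos_sin_eq; auto. lra.
Qed.

Lemma signed_angle_ell_tangent_neg (a b u v l1 l2 th : R) : 0 < a -> 0 < b -> 0 < l1 * l2 ->
  signed_angle (pscale l1 (ell_tangent a b u)) (pscale l2 (ell_tangent a b v)) th ->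
  sin (v - u) < 0 -> th < 0.
Proof.
  intros Ha Hb Hl HS Sn. pose proof HS as [Rth _].
  destruct (signed_angle_ell_tangent a b u v l1 l2 th Ha Hb Hl HS) as [_ S].
  pose proof (pnorm_ell_tangent_pos a b u Ha Hb). pose proof (pnorm_ell_tangent_pos a b v Ha Hb).
  assert (a * b * sin (v - u) < 0) by (assert (0 < a * b) by nra; nra).
  destruct (Rlt_or_le th 0) as [L | L]; auto.
  assert (0 <= sin th) by (apply sin_ge_0; lra).
  assert (0 <= sin th * (pnorm (ell_tangent a b u) * pnorm (ell_tangent a b v)))
    by (apply Rmult_le_pos; nra).
  lra.
Qed.

Lemma sum_f_R0_telescope (f g : nat -> R) (n : nat) :
  (forall k, g k = f (S k) - f k) -> sum_f_R0 g n = f (S n) - f O.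
Proof. intros H. induction n as [| n IH]; simpl; rewrite ?IH, H; ring. Qed.

Lemma sum_f_R0_neg (g : nat -> R) (n : nat) : (forall k, g k < 0) -> sum_f_R0 g n < 0.
Proof. intros H. induction n as [| n IH]; simpl; [| pose proof (H (S n))]; auto; lra. Qed.

Lemma Z_periodic_ind (N : Z) (Pr : Z -> Prop) : (0 < N)%Z ->
  (forall i, Pr (i + N)%Z -> Pr i) -> (forall m : nat, Pr (Z.of_nat m)) -> forall i, Pr i.
Proof.
  intros HN Hdown Hnat i.
  assert (Hq : forall q : nat, forall j, Pr (j + Z.of_nat q * N)%Z -> Pr j).
  { induction q as [| q IH]; intros j Hj.
    - rewrite Z.mul_0_l, Z.add_0_r in Hj. exact Hj.
    - apply Hdown, IH. replace (j + N + Z.of_nat q * N)%Z with (j + Z.of_nat (S q) * N)%Z by lia.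
      exact Hj. }
  apply (Hq (Z.to_nat (Z.abs i))).
  replace (i + Z.of_nat (Z.to_nat (Z.abs i)) * N)%Z
    with (Z.of_nat (Z.to_nat (i + Z.abs i * N))) by (rewrite !Z2Nat.id; nia).
  apply Hnat.
Qed.

Lemma pow_m1_odd (n : nat) : Nat.Odd n -> (-1) ^ n = -1.
Proof. intros [j ->]. replace (2 * j + 1)%nat with (S (2 * j)) by lia. apply pow_1_odd. Qed.

Lemma pow_m1_even (n : nat) : Nat.Even n -> (-1) ^ n = 1.
Proof. intros [j ->]. apply pow_1_even. Qed.

(** * The billiard as a tangency chain *)

Section ConjugateBilliard.

Variables ac bc ae be : R.
Hypotheses (Hac : 0 < ac) (Hbc : 0 < bc) (Hae : ac < ae) (Hbe : bc < be).
Variables (P Q : Z -> pt) (N tau : nat).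
Hypotheses (Hbil : billiard ae be ac bc P) (HN : (0 < N)%nat) (Hper : periodic_with P N)
  (HQ : forall i, contact_point ac bc (P i) (P (i + 1)%Z) (Q i))
  (Htau : turning_number P N tau).

Local Notation A := (ae / ac).
Local Notation B := (be / bc).

Let HA : 1 < A.
Proof. apply (Rmult_lt_reg_r ac); auto. unfold Rdiv. rewrite Rmult_assoc, Rinv_l; lra. Qed.

Let HB : 1 < B.
Proof. apply (Rmult_lt_reg_r bc); auto. unfold Rdiv. rewrite Rmult_assoc, Rinv_l; lra. Qed.

Let t (i : Z) : R := ecc_angle ae be (P i).
Let s (i : Z) : R := ecc_angle ac bc (Q i).
Let z : nat -> R := interleave (fun k => t (Z.of_nat k)) (fun k => s (Z.of_nat k)).
Let lam (i : Z) : R := ae * be / (ac * bc) * sin (t (i + 1) - t i).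

Lemma vertex_ell_point (i : Z) : P i = ell_point ae be (t i).
Proof. apply on_ellipse_ecc_angle; [lra | lra | apply Hbil]. Qed.

Lemma contact_ell_point (i : Z) : Q i = ell_point ac bc (s i).
Proof. apply on_ellipse_ecc_angle; auto. apply HQ. Qed.

Lemma vertex_contact_tangency (i : Z) :
  tangency A B (t i) (s i) = 1 /\ tangency A B (t (i + 1)%Z) (s i) = 1.
Proof.
  destruct (contact_point_dot ac bc _ _ _ Hac Hbc (HQ i)) as [D1 D2].
  rewrite contact_ell_point, vertex_ell_point, dot_ell_point_polar_normal in D1, D2 by lra.
  auto.
Qed.

Lemma contact_periodic (i : Z) : Q (i + Z.of_nat N)%Z = Q i.
Proof.
  apply (contact_point_unique ac bc (P i) (P (i + 1)%Z)); auto.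
  pose proof (HQ (i + Z.of_nat N)%Z) as H.
  replace (i + Z.of_nat N + 1)%Z with (i + 1 + Z.of_nat N)%Z in H by ring.
  rewrite !Hper in H. exact H.
Qed.

Lemma vertex_angle_nondegenerate (i : Z) : ~ same_angle (t i) (t (i + 1)%Z).
Proof.
  intros [C S]. apply (proj1 (proj2 (Hbil i))).
  rewrite (vertex_ell_point i), vertex_ell_point. unfold ell_point. rewrite C, S. reflexivity.
Qed.

(* Equal consecutive contact points would make two consecutive sides lie on the same tangent. *)
Lemma contact_angle_nondegenerate (i : Z) : ~ same_angle (s i) (s (i + 1)%Z).
Proof.
  intros [C S].
  assert (EQ : Q (i + 1)%Z = Q i).
  { rewrite (contact_ell_point i), contact_ell_point. unfold ell_point. rewrite C, S. reflexivity. }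
  apply (proj2 (proj2 (proj2 (Hbil (i + 1)%Z)))).
  replace (i + 1 - 1)%Z with i by ring. intro X.
  destruct (contact_point_dot ac bc _ _ _ Hac Hbc (HQ i)) as [D1 D2].
  destruct (contact_point_dot ac bc _ _ _ Hac Hbc (HQ (i + 1)%Z)) as [_ D3].
  rewrite EQ in D3.
  assert (Hn : polar_normal ac bc (Q i) <> (0, 0)) by (apply polar_normal_neq_0; auto; apply HQ).
  assert (Hne : forall j, P j <> P (j + 1)%Z) by (intros j E; apply (proj1 (proj2 (Hbil j))); auto).
  rewrite (line_iff_dot _ _ _ X (Hne i) D1 D2 Hn), (line_iff_dot _ _ _ X (Hne (i + 1)%Z) D2 D3 Hn).
  tauto.
Qed.

Lemma z_even (k : nat) : z (2 * k)%nat = t (Z.of_nat k).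
Proof. apply interleave_even. Qed.

Lemma z_odd (k : nat) : z (S (2 * k)) = s (Z.of_nat k).
Proof. apply interleave_odd. Qed.

Lemma z_tangency_chain : tangency_chain A B z.
Proof.
  apply interleave_tangency_chain; intro i; [| rewrite Nat2Z.inj_succ];
    apply vertex_contact_tangency.
Qed.

Lemma z_nondegenerate (k : nat) : ~ same_angle (z k) (z (S (S k))).
Proof.
  apply interleave_nondegenerate; intro i; rewrite Nat2Z.inj_succ;
    [apply vertex_angle_nondegenerate | apply contact_angle_nondegenerate].
Qed.

Lemma z_periodic (k : nat) : z (k + 2 * N)%nat = z k.
Proof.
  apply interleave_periodic; intro i; rewrite Nat2Z.inj_add;
    [unfold t; rewrite Hper | unfold s; rewrite contact_periodic]; reflexivity.
Qed.

Lemma edge_ell_tangent (i : Z) :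
  psub (P (i + 1)%Z) (P i) = pscale (lam i) (ell_tangent ac bc (s i)).
Proof.
  rewrite (vertex_ell_point (i + 1)), (vertex_ell_point i).
  apply chord_parallel_tangent; auto; apply vertex_contact_tangency.
Qed.

Lemma edge_length_sign (k : nat) : 0 < sin (z 1%nat - z O) * lam (Z.of_nat k).
Proof.
  pose proof (tangency_chain_two_steps_sign A B HA HB z z_tangency_chain z_nondegenerate
                (2 * k)) as H.
  replace (S (S (2 * k))) with (2 * S k)%nat in H by lia.
  rewrite !z_even, Nat2Z.inj_succ, <- Z.add_1_r in H.
  assert (0 < ae * be / (ac * bc)) by (apply Rdiv_lt_0_compat; nra).
  unfold lam. rewrite Rmult_comm, Rmult_assoc.
  apply Rmult_lt_0_compat; [lra | rewrite Rmult_comm; lra].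
Qed.

Lemma contact_step_sign (k : nat) :
  0 < sin (z 1%nat - z O) * sin (s (Z.of_nat k + 1)%Z - s (Z.of_nat k)).
Proof.
  pose proof (tangency_chain_two_steps_sign A B HA HB z z_tangency_chain z_nondegenerate
                (S (2 * k))) as H.
  replace (S (S (S (2 * k)))) with (S (2 * S k)) in H by lia.
  rewrite !z_odd, Nat2Z.inj_succ, <- Z.add_1_r in H. exact H.
Qed.

Lemma exterior_angle_tangents (theta : Z -> R) : exterior_angles P theta -> forall i : Z,
  signed_angle (pscale (lam i) (ell_tangent ac bc (s i)))
               (pscale (lam (i + 1)%Z) (ell_tangent ac bc (s (i + 1)%Z))) (theta (i + 1)%Z).
Proof.
  intros Hext i. pose proof (Hext (i + 1)%Z) as H.
  replace (i + 1 - 1)%Z with i in H by ring.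
  rewrite edge_ell_tangent, edge_ell_tangent in H. exact H.
Qed.

(* A clockwise traversal would make every exterior angle negative, contradicting [tau >= 0]. *)
Lemma z_orientation : 0 < sin (z 1%nat - z O).
Proof.
  destruct Htau as [theta [Hext Hsum]].
  assert (N0 : sin (z 1%nat - z O) <> 0)
    by (apply (tangency_sin_neq_0 A B); auto; apply z_tangency_chain).
  apply Rnot_le_lt. intro Hle.
  assert (Hneg : forall k, theta (Z.of_nat k + 1)%Z < 0).
  { intro k. pose proof (edge_length_sign k) as L1. pose proof (edge_length_sign (S k)) as L2.
    pose proof (contact_step_sign k) as Sk. rewrite Nat2Z.inj_succ, <- Z.add_1_r in L2.
    assert (Hs : sin (z 1%nat - z O) < 0) by lra.
    assert (lam (Z.of_nat k) < 0) by nra. assert (lam (Z.of_nat k + 1)%Z < 0) by nra.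
    apply (signed_angle_ell_tangent_neg ac bc (s (Z.of_nat k)) (s (Z.of_nat k + 1)%Z)
             (lam (Z.of_nat k)) (lam (Z.of_nat k + 1)%Z)); auto.
    - nra.
    - apply exterior_angle_tangents; auto.
    - nra. }
  pose proof (sum_f_R0_neg _ (N - 1) Hneg). pose proof PI_RGT_0. pose proof (pos_INR tau).
  nra.
Qed.

Lemma z_steps_pos (k : nat) : 0 < sin (z (S k) - z k).
Proof.
  apply (tangency_chain_steps_pos A B HA HB);
    auto using z_tangency_chain, z_nondegenerate, z_orientation.
Qed.

Lemma lift_z_two_steps (k : nat) : lift z (S (S k)) < lift z k + PI.
Proof.
  pose proof (lift_tangency_chain A B z z_tangency_chain) as Hl.
  apply (tangency_two_steps A B HA HB _ (lift z (S k))); auto; apply (lift_step z z_steps_pos).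
Qed.

Lemma exterior_angle_tangent_arg (theta : Z -> R) : exterior_angles P theta -> forall k : nat,
  theta (Z.of_nat k + 1)%Z =
  tangent_arg ac bc (lift z (S (2 * S k))) - tangent_arg ac bc (lift z (S (2 * k))).
Proof.
  intros Hext k.
  pose proof (edge_length_sign k) as L1. pose proof (edge_length_sign (S k)) as L2.
  pose proof (exterior_angle_tangents theta Hext (Z.of_nat k)) as H.
  replace (Z.of_nat k + 1)%Z with (Z.of_nat (S k)) in * by lia.
  rewrite <- (z_odd k), <- (z_odd (S k)),
    <- (ell_tangent_same_angle ac bc _ _ (lift_same_angle z (S (2 * k)))),
    <- (ell_tangent_same_angle ac bc _ _ (lift_same_angle z (S (2 * S k)))) in H.
  pose proof z_orientation.
  assert (P1 : 0 < lam (Z.of_nat k)) by nra. assert (P2 : 0 < lam (Z.of_nat (S k))) by nra.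
  apply (signed_angle_ell_tangent_eq ac bc _ _ _ _ _ Hac Hbc (Rmult_lt_0_compat _ _ P1 P2) H).
  replace (S (2 * S k)) with (S (S (S (2 * k)))) by lia.
  pose proof (lift_step z z_steps_pos (S (2 * k))).
  pose proof (lift_step z z_steps_pos (S (S (2 * k)))).
  pose proof (lift_z_two_steps (S (2 * k))). lra.
Qed.

(* The exterior angles telescope, so one period of the billiard advances the lifted
   parameter of the contact points by the total turning [2 tau PI]. *)
Lemma lift_z_winding (k : nat) : lift z (k + 2 * N) = lift z k + 2 * (PI * INR tau).
Proof.
  destruct Htau as [theta [Hext Hsum]].
  set (f := fun k => tangent_arg ac bc (lift z (S (2 * k)))).
  rewrite (sum_f_R0_telescope f) in Hsum by (apply exterior_angle_tangent_arg; auto).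
  replace (S (N - 1)) with N in Hsum by lia.
  unfold f in Hsum. rewrite Nat.mul_0_r, tangent_arg_same_angle in Hsum.
  2:{ replace (S (2 * N)) with (1 + 2 * N)%nat by lia.
      destruct (lift_same_angle z (1 + 2 * N)) as [C1 S1], (lift_same_angle z 1) as [C2 S2].
      rewrite z_periodic in C1, S1. split; congruence. }
  pose proof (lift_periodic z z_steps_pos (2 * N) z_periodic) as Hlp.
  rewrite Hlp. specialize (Hlp 1%nat). replace (1 + 2 * N)%nat with (S (2 * N)) in Hlp by lia.
  lra.
Qed.

Lemma z_half_turn (k : nat) :
  cos (z (k + N)%nat) = (-1) ^ tau * cos (z k) /\ sin (z (k + N)%nat) = (-1) ^ tau * sin (z k).
Proof.
  assert (Hhalf : lift z (k + N) = lift z (k + 0) + PI * INR tau).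
  { apply (tangency_chain_half_period A B HA HB (fun j => lift z (k + j)) N tau).
    - intro j. cbv beta. rewrite Nat.add_succ_r. apply lift_tangency_chain, z_tangency_chain.
    - intro j. cbv beta. rewrite Nat.add_succ_r. apply lift_step, z_steps_pos.
    - cbv beta. rewrite Nat.add_0_r. apply lift_z_winding. }
  destruct (lift_same_angle z (k + N)) as [<- <-], (lift_same_angle z k) as [<- <-].
  rewrite Hhalf, Nat.add_0_r. apply cos_sin_add_nPI.
Qed.

Lemma vertex_half_turn (h : nat) : N = (2 * h)%nat ->
  forall i : Z, P (i + Z.of_nat h)%Z = pscale ((-1) ^ tau) (P i).
Proof.
  intros HNh. apply (Z_periodic_ind (Z.of_nat N)); [lia | |].
  - intros i H. rewrite <- (Hper i), <- H, <- (Hper (i + Z.of_nat h)%Z). f_equal. ring.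
  - intro m. rewrite !vertex_ell_point, <- Nat2Z.inj_add, <- !z_even.
    destruct (z_half_turn (2 * m)) as [Hc Hs].
    replace (2 * m + N)%nat with (2 * (m + h))%nat in Hc, Hs by lia.
    apply ell_point_scale; auto.
Qed.

Lemma conjugate_half_turn (n : nat) : N = (2 * n + 1)%nat ->
  forall i : Z, alpha ae be ac bc (Q (i + Z.of_nat n)%Z) = pscale ((-1) ^ tau) (P i).
Proof.
  intros HNn. apply (Z_periodic_ind (Z.of_nat N)); [lia | |].
  - intros i H. rewrite <- (Hper i), <- H, <- (contact_periodic (i + Z.of_nat n)%Z).
    f_equal. f_equal. ring.
  - intro m. rewrite contact_ell_point, vertex_ell_point, alpha_ell_point by lra.
    rewrite <- Nat2Z.inj_add, <- z_even, <- z_odd.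
    destruct (z_half_turn (2 * m)) as [Hc Hs].
    replace (2 * m + N)%nat with (S (2 * (m + n))) in Hc, Hs by lia.
    apply ell_point_scale; auto.
Qed.

End ConjugateBilliard.

Theorem corollary4p2
  (ac bc ke ae be : R) (N tau : nat) (P Q : Z -> pt)
  (hac : ac > bc) (hbc : bc > 0) (hke : ke > 0)
  (hae : ae > 0) (hbe : be > 0)
  (hae2 : ae ^ 2 = ac ^ 2 + ke) (hbe2 : be ^ 2 = bc ^ 2 + ke)
  (hbil : billiard ae be ac bc P)
  (hper : least_period P N)
  (htau : turning_number P N tau)
  (hQ : forall i : Z, contact_point ac bc (P i) (P (i + 1)%Z) (Q i)) :
  let P' := fun i : Z => alpha ae be ac bc (Q i) in
  ((Nat.Even N -> Nat.Odd tau ->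
      forall i : Z, P (i + Z.of_nat (N / 2))%Z = popp (P i)) /\
   (forall n : nat, N = (2 * n + 1)%nat -> Nat.Odd tau ->
      forall i : Z, P' (i + Z.of_nat n)%Z = popp (P i)) /\
   (forall n : nat, N = (2 * n + 1)%nat -> Nat.Even tau ->
      forall i : Z, P i = P' (i + Z.of_nat n)%Z)).
Proof.
  intros P'. destruct hper as [HN [Hper _]].
  assert (Hac : 0 < ac) by lra.
  assert (Hae : ac < ae) by nra.
  assert (Hbe : bc < be) by nra.
  assert (Hopp : forall X, popp X = pscale (-1) X)
    by (intros [x y]; unfold popp, pscale; cbn [fst snd]; f_equal; ring).
  split; [| split].
  - intros [h ->] Hodd i.
    replace (2 * h / 2)%nat with h by (rewrite Nat.mul_comm, Nat.div_mul; lia).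
    rewrite (vertex_half_turn ac bc ae be Hac hbc Hae Hbe P Q (2 * h) tau), pow_m1_odd, Hopp;
      auto.
  - intros n HNn Hodd i. unfold P'.
    rewrite (conjugate_half_turn ac bc ae be Hac hbc Hae Hbe P Q N tau), pow_m1_odd, Hopp;
      auto.
  - intros n HNn Heven i. unfold P'.
    rewrite (conjugate_half_turn ac bc ae be Hac hbc Hae Hbe P Q N tau), pow_m1_even; auto.
    destruct (P i) as [x y]. unfold pscale. cbn [fst snd]. f_equal; ring.
Qed.
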